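(* Assume the continuity assumption holds and let $\lambda^*$ be a minimizer of $\lambda\mapsto\sum_{s\in\{-1,1\}}\mathbb{E}[\max_{k\in[K]}(\pi_s p_k(X,s)-s\lambda_k)\mid S=s]$ over $\mathbb{R}^K$. Then any classifier $g$ satisfying $$g(x,s)\in\arg\max_{k\in[K]}\big(\pi_s p_k(x,s)-s\lambda^*_k\big)\quad\text{for all }(x,s)\in\mathcal{X}\times\{-1,1\}$$ is exactly fair and minimizes $\mathcal{R}$ over $\mathcal{G}_{\rm fair}$, i.e. it is an optimal exactly fair classifier.
   Context: $(X,S,Y)$ is a random triple with distribution $\mathbb{P}$, where $X\in\mathcal{X}\subset\mathbb{R}^d$, $S\in\{-1,1\}$ and $Y\in[K]=\{1,\dots,K\}$. Let $\pi_s=\mathbb{P}(S=s)$, assumed $>0$ for both $s$, and $p_k(x,s)=\mathbb{P}(Y=k\mid X=x,S=s)$. A classifier is a measurable map $g:\mathcal{X}\times\{-1,1\}\to[K]$; the risk is $\mathcal{R}(g)=\mathbb{P}(g(X,S)\neq Y)$. $g$ is exactly fair ($g\in\mathcal{G}_{\rm fair}$) if $\mathbb{P}(g(X,S)=k\mid S=1)=\mathbb{P}(g(X,S)=k\mid S=-1)$ for all $k\in[K]$. Continuity assumption: for all $k\neq j$ in $[K]$ and $s\in\{-1,1\}$, the map $t\mapsto\mathbb{P}(p_k(X,S)-p_j(X,S)\le t\mid S=s)$ is continuous. *)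

From HB Require Import structures.
From mathcomp Require Import all_boot all_order all_algebra.
From mathcomp Require Import all_classical all_reals all_analysis.
Set Implicit Arguments. Unset Strict Implicit. Unset Printing Implicit Defensive.
Import Order.TTheory GRing.Theory Num.Theory.
Import numFieldNormedType.Exports.
Local Open Scope classical_set_scope.
Local Open Scope ring_scope.

Section FairDefs.
Context {d d' : measure_display} {Omega : measurableType d} {T : measurableType d'}
  {R : realType} (P : probability Omega R) {K : nat}.

(* the sensitive attribute s in {-1,1} is encoded by a boolean: true = 1, false = -1 *)
Definition sgnb (b : bool) : R := if b then 1 else -1.

Definition prob (A : set Omega) : R := fine (P A).

Definition pi_s (S : Omega -> bool) (b : bool) : R := prob [set w | S w = b].

Definition condprob (S : Omega -> bool) (A : set Omega) (b : bool) : R :=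
  prob (A `&` [set w | S w = b]) / pi_s S b.

Definition condexp (S : Omega -> bool) (f : Omega -> R) (b : bool) : R :=
  fine (\int[P]_(w in [set w | S w = b]) (f w)%:E) / pi_s S b.

(* p is a version of the conditional probabilities p_k(x,s) = P(Y = k | X = x, S = s):
   measurable in x, valued in [0,1], and satisfying the defining identity
   P(Y = k, S = s, X in A) = E[p_k(X,s) 1_{S = s, X in A}] for all measurable A. *)
Definition is_cond_prob (X : Omega -> T) (S : Omega -> bool) (Y : Omega -> 'I_K)
  (p : 'I_K -> T -> bool -> R) : Prop :=
  forall (k : 'I_K) (b : bool),
    measurable_fun setT (fun x => p k x b) /\
    (forall x, 0 <= p k x b <= 1) /\
    (forall A : set T, measurable A ->
      (P [set w | Y w = k /\ S w = b /\ A (X w)] =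
      \int[P]_(w in [set w | S w = b /\ A (X w)]) (p k (X w) b)%:E)%E).

Definition continuity_assumption (X : Omega -> T) (S : Omega -> bool)
  (p : 'I_K -> T -> bool -> R) : Prop :=
  forall (k j : 'I_K) (b : bool), k != j ->
    continuous (fun t : R =>
      condprob S [set w | p k (X w) (S w) - p j (X w) (S w) <= t] b).

(* a classifier is a measurable map X x {-1,1} -> [K] (both finite sets discrete) *)
Definition is_classifier (g : T -> bool -> 'I_K) : Prop :=
  forall (k : 'I_K) (b : bool), measurable [set x | g x b = k].

Definition risk (X : Omega -> T) (S : Omega -> bool) (Y : Omega -> 'I_K)
  (g : T -> bool -> 'I_K) : R :=
  prob [set w | g (X w) (S w) <> Y w].

Definition exactly_fair (X : Omega -> T) (S : Omega -> bool) (g : T -> bool -> 'I_K) : Prop :=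
  forall k : 'I_K,
    condprob S [set w | g (X w) (S w) = k] true =
    condprob S [set w | g (X w) (S w) = k] false.

Definition maxK (f : 'I_K -> R) : R := fine (\big[maxe/-oo%E]_(k < K) (f k)%:E).

Definition score (S : Omega -> bool) (p : 'I_K -> T -> bool -> R) (lam : 'I_K -> R)
  (x : T) (b : bool) (k : 'I_K) : R :=
  pi_s S b * p k x b - sgnb b * lam k.

Definition dual_obj (X : Omega -> T) (S : Omega -> bool) (p : 'I_K -> T -> bool -> R)
  (lam : 'I_K -> R) : R :=
  condexp S (fun w => maxK (score S p lam (X w) true)) true +
  condexp S (fun w => maxK (score S p lam (X w) false)) false.

End FairDefs.

From HB Require Import structures.
From mathcomp Require Import all_boot all_order all_algebra.
From mathcomp Require Import all_classical all_reals all_analysis.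
From mathcomp Require Import measurable_realfun.
From mathcomp Require Import ring lra.
Import Order.TTheory GRing.Theory Num.Theory.
Import numFieldNormedType.Exports.
Local Open Scope classical_set_scope.
Local Open Scope ring_scope.

(* Shifting lam*_k by s t lowers the class-k scores of group s by
   t and raises those of group -s by t.  Pointwise, the perturbed maximal
   score is at most the old one, -/+ t when g chooses k, plus t times the
   number of "near ties" (ordered pairs of classes whose scores differ by at
   most t).  Integrating and using the minimality of lam* yields
     P(g = k | S = s) <= P(g = k | S = -s) + (near-tie probabilities),
   and the continuity assumption makes near ties negligible as t -> 0.
   Optimality.  For any classifier h, 1 - risk h = sum_s P(h = Y, S = s),
   and if h is fair the lam-terms of the integrated scores of h cancel, so
   sum_s E[score(h) ; S = s] / pi_s = 1 - risk h.  Since g maximizes the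
   score pointwise, risk g <= risk h. *)

Section MaxOverClasses.
Context {R : realType} {K : nat}.

Lemma maxKE (f : 'I_K -> R) (i0 : 'I_K) :
  maxK f = \big[Num.max/f i0]_(k < K) f k.
Proof.
rewrite /maxK.
have -> : (\big[maxe/-oo%E]_(k < K) (f k)%:E)
        = (\big[maxe/(f i0)%:E]_(k < K) (f k)%:E).
  apply/le_anti/andP; split.
    apply/bigmax_leP; split => //; first by rewrite leNye.
    by move=> i _; exact: le_bigmax.
  apply/bigmax_leP; split => //; first exact: le_bigmax.
  by move=> i _; exact: le_bigmax.
by rewrite -(big_morph EFin (fun x y => EFin_max x y) (erefl (f i0)%:E)).
Qed.

Lemma maxK_ge (f : 'I_K -> R) k : f k <= maxK f.
Proof. by rewrite (maxKE f k); exact: le_bigmax. Qed.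

Lemma maxK_le (f : 'I_K -> R) (c : R) (i0 : 'I_K) :
  (forall k, f k <= c) -> maxK f <= c.
Proof. by move=> H; rewrite (maxKE f i0); apply/bigmax_leP; split. Qed.

Lemma maxK_eq (f : 'I_K -> R) j : (forall k, f k <= f j) -> maxK f = f j.
Proof. by move=> H; apply/le_anti; rewrite maxK_ge maxK_le. Qed.

Definition near_ties (s : 'I_K -> R) (t : R) : R :=
  \sum_i \sum_(j | j != i) ((0 <= s i - s j) && (s i - s j <= t))%:R.

Lemma near_ties_ge0 s t : 0 <= near_ties s t.
Proof. by apply: sumr_ge0 => i _; apply: sumr_ge0 => j _; exact: ler0n. Qed.

Lemma near_ties_ge1 s t i j : j != i -> 0 <= s i - s j -> s i - s j <= t ->
  1 <= near_ties s t.
Proof.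
move=> ji h1 h2; rewrite /near_ties (bigD1 i) //= (bigD1 j) //= h1 h2 /=.
rewrite -addrA ler_wpDr //; apply: addr_ge0.
  by apply: sumr_ge0 => l _; exact: ler0n.
by apply: sumr_ge0 => l _; apply: sumr_ge0 => l' _; exact: ler0n.
Qed.

(* Lowering class k by t lowers the maximum by t when k is the maximizer j0,
   unless some other class is within t of it (a near tie). *)
Lemma maxK_shift_down (s : 'I_K -> R) (j0 k : 'I_K) (t : R) : 0 <= t ->
  (forall j, s j <= s j0) ->
  maxK (fun j => s j - (if j == k then t else 0)) <=
  maxK s - t * (j0 == k)%:R + t * near_ties s t.
Proof.
move=> t0 hs; rewrite (maxK_eq s j0 hs).
have hN := near_ties_ge0 s t.
have le0 j : s j - (if j == k then t else 0) <= s j0.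
  by rewrite (le_trans _ (hs j)) // lerBlDr lerDl; case: ifP.
have [jk|jk] := eqVneq j0 k; last first.
  rewrite mulr0 subr0; apply: (maxK_le _ _ j0) => j.
  by rewrite (le_trans (le0 j)) // lerDl mulr_ge0.
subst j0; rewrite mulr1.
have [[j [jk hj]]|none] := pselect (exists j, j != k /\ s k - s j <= t).
  apply: (maxK_le _ _ k) => l; rewrite (le_trans (le0 l)) //.
  have h0 : 0 <= s k - s j by rewrite subr_ge0.
  have h1 := near_ties_ge1 s t k j jk h0 hj.
  by rewrite -addrA lerDl addrC subr_ge0 -{1}(mulr1 t) ler_wpM2l.
apply: (maxK_le _ _ k) => l; rewrite (@le_trans _ _ (s k - t)) //; last first.
  by rewrite lerDl mulr_ge0.
have [->|lk] := eqVneq l k; first by rewrite ?eqxx.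
rewrite subr0 lerBrDr -lerBrDl; apply/ltW.
by rewrite ltNge; apply/negP => h; apply: none; exists l; split.
Qed.

(* Raising class k by t raises the maximum by t when k is the maximizer j0,
   and otherwise only if k gets within t of the maximizer (a near tie). *)
Lemma maxK_shift_up (s : 'I_K -> R) (j0 k : 'I_K) (t : R) : 0 <= t ->
  (forall j, s j <= s j0) ->
  maxK (fun j => s j + (if j == k then t else 0)) <=
  maxK s + t * (j0 == k)%:R + t * near_ties s t.
Proof.
move=> t0 hs; rewrite (maxK_eq s j0 hs).
have hN := near_ties_ge0 s t.
have le1 j : s j + (if j == k then t else 0) <= s j0 + t.
  by apply: lerD => //; case: ifP.
have [jk|jk] := eqVneq j0 k.
  subst j0; rewrite mulr1; apply: (maxK_le _ _ k) => j.
  by rewrite (le_trans (le1 j)) // lerDl mulr_ge0.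
rewrite mulr0 addr0.
have [hk|hk] := leP (s k + t) (s j0).
  apply: (maxK_le _ _ k) => j; rewrite (@le_trans _ _ (s j0)) //; last first.
    by rewrite lerDl mulr_ge0.
  have [->|jk'] := eqVneq j k; first by rewrite ?eqxx.
  by rewrite ?addr0.
have h1 : 1 <= near_ties s t.
  apply: (near_ties_ge1 s t j0 k); first by rewrite eq_sym.
    by rewrite subr_ge0.
  by lra.
apply: (maxK_le _ _ k) => j; rewrite (le_trans (le1 j)) // lerD2l.
by rewrite -{1}(mulr1 t) ler_wpM2l.
Qed.

End MaxOverClasses.

Section BoundedMeasurable.
Context {d : measure_display} {Omega : measurableType d} {R : realType}
  (P : probability Omega R).

(* All the random variables of the argument are bounded and measurable, hence
   integrable over every measurable set; this class is closed under the
   operations we use. *)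
Definition bounded_mfun (f : Omega -> R) :=
  measurable_fun setT f /\ exists M : R, forall w, `|f w| <= M.

Lemma bounded_integrable (D : set Omega) f : measurable D -> bounded_mfun f ->
  P.-integrable D (EFin \o f).
Proof.
move=> mD [mf [M hM]]; apply/integrableP; split.
  by apply/measurable_EFinP; exact: measurable_funS mf.
apply: (@le_lt_trans _ _ (`|M|%:E * P D)%E).
  apply: integral_le_bound => //.
  - by apply/measurable_EFinP; exact: measurable_funS mf.
  - apply: aeW => w _ /=; rewrite lee_fin (le_trans (hM w))//.
    exact: ler_norm.
apply: lte_mul_pinfty => //.
by rewrite (le_lt_trans (probability_le1 P mD)) ?ltry.
Qed.

Lemma bounded_cst (c : R) : bounded_mfun (fun _ => c).
Proof. by split; [exact: measurable_cst | exists `|c|]. Qed.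

Lemma bounded_add f g : bounded_mfun f -> bounded_mfun g ->
  bounded_mfun (fun w => f w + g w).
Proof.
move=> [mf [M hM]] [mg [N hN]]; split; first exact: measurable_funD.
by exists (M + N) => w; rewrite (le_trans (ler_normD _ _))// lerD.
Qed.

Lemma bounded_scale (c : R) {f} : bounded_mfun f ->
  bounded_mfun (fun w => c * f w).
Proof.
move=> [mf [M hM]]; split; first exact: measurable_funM.
by exists (`|c| * M) => w; rewrite normrM ler_wpM2l.
Qed.

Lemma bounded_sub f g : bounded_mfun f -> bounded_mfun g ->
  bounded_mfun (fun w => f w - g w).
Proof.
move=> hf hg; apply: bounded_add => //.
have := bounded_scale (-1) hg.
by congr bounded_mfun; apply/funext => w; rewrite mulN1r.
Qed.

Lemma bounded_indic (A : set Omega) : measurable A ->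
  bounded_mfun (fun w => \1_A w).
Proof.
move=> mA; split; first exact: measurable_indic.
by exists 1 => w; rewrite /indic; case: (w \in A); rewrite ?normr1 ?normr0.
Qed.

Lemma bounded_indicM (Q : set Omega) (f : Omega -> R) : measurable Q ->
  bounded_mfun f -> bounded_mfun (fun w => \1_Q w * f w).
Proof.
move=> mQ [mf [M hM]]; split.
  by apply: measurable_funM => //; exact: measurable_indic.
exists `|M| => w; rewrite normrM /indic; case: (w \in Q) => /=.
  by rewrite normr1 mul1r (le_trans (hM w)) ?ler_norm.
by rewrite normr0 mul0r.
Qed.

Lemma bounded_sum (I : Type) (s : seq I) (Q : pred I) (h : I -> Omega -> R) :
  (forall i, bounded_mfun (h i)) ->
  bounded_mfun (fun w => \sum_(i <- s | Q i) h i w).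
Proof.
move=> hh; elim: s => [|i s IH].
  by under eq_fun do rewrite big_nil; exact: bounded_cst.
under eq_fun do rewrite big_cons.
case: (Q i) => //; exact: bounded_add.
Qed.

Lemma bounded_bigmax (I : Type) (s : seq I) (h0 : Omega -> R)
    (h : I -> Omega -> R) :
  bounded_mfun h0 -> (forall i, bounded_mfun (h i)) ->
  bounded_mfun (fun w => \big[Num.max/h0 w]_(i <- s) h i w).
Proof.
move=> h0b hh; elim: s => [|i s IH].
  by under eq_fun do rewrite big_nil.
under eq_fun do rewrite big_cons.
have [mi [M hM]] := hh i; have [ms [N hN]] := IH; split.
  exact: (measurable_maxr mi ms).
exists (M + `|N|) => w; rewrite /Num.max; case: ifP => _.
  by rewrite (le_trans (hN w))// ler_wpDl ?ler_norm// (le_trans _ (hM w)).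
by rewrite (le_trans (hM w))// lerDl.
Qed.

Lemma bounded_maxK {K : nat} (i0 : 'I_K) (h : 'I_K -> Omega -> R) :
  (forall i, bounded_mfun (h i)) ->
  bounded_mfun (fun w => maxK (fun k => h k w)).
Proof.
move=> hh; under eq_fun do rewrite (maxKE _ i0).
exact: bounded_bigmax.
Qed.

Lemma measurable_le_set (f : Omega -> R) (t : R) : measurable_fun setT f ->
  measurable [set w | f w <= t].
Proof.
move=> mf; have := mf measurableT _ (measurable_itv `]-oo, t]).
rewrite setTI; congr measurable; apply/seteqP; split => w /=;
  by rewrite in_itv /=.
Qed.

Lemma measurable_ge_set (f : Omega -> R) (t : R) : measurable_fun setT f ->
  measurable [set w | t <= f w].
Proof.
move=> mf; have := mf measurableT _ (measurable_itv `[t, +oo[).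
rewrite setTI; congr measurable; apply/seteqP; split => w /=;
  by rewrite in_itv /= andbT.
Qed.

Local Notation E D f := (Rintegral P D f).

Lemma E_add (D : set Omega) f g : measurable D ->
  bounded_mfun f -> bounded_mfun g ->
  E D (fun w => f w + g w) = E D f + E D g.
Proof.
by move=> mD hf hg; apply: RintegralD => //; exact: bounded_integrable.
Qed.

Lemma E_scale (D : set Omega) (c : R) f : measurable D -> bounded_mfun f ->
  E D (fun w => c * f w) = c * E D f.
Proof.
by move=> mD hf; apply: RintegralZl => //; exact: bounded_integrable.
Qed.

Lemma E_le (D : set Omega) f g : measurable D ->
  bounded_mfun f -> bounded_mfun g ->
  (forall w, D w -> f w <= g w) -> E D f <= E D g.
Proof.
by move=> mD hf hg H; apply: le_Rintegral => //; exact: bounded_integrable.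
Qed.

Lemma E_cst (D : set Omega) (c : R) : measurable D ->
  E D (fun _ => c) = c * fine (P D).
Proof. by move=> mD; rewrite Rintegral_cst. Qed.

Lemma E_indic (D A : set Omega) : measurable D -> measurable A ->
  E D (fun w => \1_A w) = fine (P (A `&` D)).
Proof. by move=> mD mA; rewrite /Rintegral integral_indic. Qed.

Lemma E_restrict (D Q : set Omega) (f : Omega -> R) :
  E D (fun w => \1_Q w * f w) = E (D `&` Q) f.
Proof.
rewrite Rintegral_mkcondr; apply: eq_Rintegral => w _.
by rewrite /restrict /indic; case: (w \in Q); rewrite ?mul1r ?mul0r.
Qed.

Lemma E_sum (D : set Omega) (I : Type) (s : seq I) (Q : pred I)
    (h : I -> Omega -> R) :
  measurable D -> (forall i, bounded_mfun (h i)) ->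
  E D (fun w => \sum_(i <- s | Q i) h i w) = \sum_(i <- s | Q i) E D (h i).
Proof.
move=> mD hh; elim: s => [|i s IH].
  under eq_Rintegral do rewrite big_nil.
  by rewrite big_nil Rintegral_cst // mul0r.
under eq_Rintegral do rewrite big_cons.
rewrite big_cons; case: (Q i) => //.
by rewrite E_add //; [rewrite IH | exact: bounded_sum].
Qed.

Lemma indic_bool (A : set Omega) w (bb : bool) :
  (A w <-> bb) -> \1_A w = bb%:R :> R.
Proof.
case: bb => H; first by rewrite indicE mem_set //; apply/H.
by rewrite indicE memNset // => /H.
Qed.

Lemma indic1 (A : set Omega) w : A w -> \1_A w = 1 :> R.
Proof. by move=> Aw; rewrite indicE mem_set. Qed.

Lemma indic0 (A : set Omega) w : ~ A w -> \1_A w = 0 :> R.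
Proof. by move=> Aw; rewrite indicE memNset. Qed.

Lemma indic_iff (A A' : set Omega) w :
  (A w <-> A' w) -> \1_A w = \1_A' w :> R.
Proof.
move=> H; have [Aw|Aw] := pselect (A w); first by rewrite !indic1 //; apply/H.
by rewrite !indic0 // => /H.
Qed.

End BoundedMeasurable.

Lemma continuous_at_delta {R : realType} (F : R -> R) (u e : R) :
  {for u, continuous F} -> 0 < e ->
  exists2 dl, 0 < dl & forall s, `|u - s| < dl -> `|F u - F s| < e.
Proof.
move=> /cvgrPdist_lt /(_ e) H he; have := H he.
move=> /nbhs_ballP [dl dl0 Hd]; exists dl => // s hs; exact: Hd.
Qed.

(* The algebra behind the perturbation argument: comparing the dual
   objective at lam and at its perturbation, and dividing by t > 0. *)
Lemma perturbation_ratio_le {R : realFieldType} (a c x x' y y' pi pi' t : R) :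
  0 < t ->
  a / pi + c / pi' <=
    (a - t * x + t * y) / pi + (c + t * x' + t * y') / pi' ->
  x / pi <= x' / pi' + (y / pi + y' / pi').
Proof.
move=> t0 H.
have e1 : (a - t * x + t * y) / pi = a / pi - t * (x / pi) + t * (y / pi).
  by rewrite !mulrDl mulNr !mulrA.
have e2 : (c + t * x' + t * y') / pi' =
    c / pi' + t * (x' / pi') + t * (y' / pi').
  by rewrite !mulrDl !mulrA.
rewrite e1 e2 in H; move: H.
move: (a / pi) (c / pi') (x / pi) (x' / pi') (y / pi) (y' / pi').
by move=> A C X1 X2 Y1 Y2 H; nra.
Qed.

Section FairClassification.
Context {d d' : measure_display} {Omega : measurableType d}
  {T : measurableType d'} {R : realType} (P : probability Omega R) {K : nat}
  (X : Omega -> T) (S : Omega -> bool) (Y : Omega -> 'I_K)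
  (p : 'I_K -> T -> bool -> R).
Hypotheses (mX : measurable_fun setT X)
  (mS : forall b : bool, measurable [set w | S w = b])
  (mY : forall k : 'I_K, measurable [set w | Y w = k])
  (pi_gt0 : forall b : bool, 0 < pi_s P S b)
  (hcp : is_cond_prob P X S Y p).
(* A class, needed to take maxima over [K]. *)
Variable i0 : 'I_K.

Local Notation B c := [set w | S w = c].
Local Notation pic c := (pi_s P S c).
Local Notation E D f := (Rintegral P D f).
Local Notation sc lam c k w := (score P S p lam (X w) c k).
Local Notation Hk h k c := [set w | h (X w) c = k].

Lemma measurable_preimage_X (A : set T) : measurable A ->
  measurable [set w | A (X w)].
Proof. by move=> mA; have := mX measurableT _ mA; rewrite setTI. Qed.

Lemma bounded_p k c : bounded_mfun (fun w => p k (X w) c).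
Proof.
have [mp [hb _]] := hcp k c; split.
  exact: (measurableT_comp mp mX).
exists 1 => w; have /andP[h0 h1] := hb (X w).
by rewrite ger0_norm.
Qed.

Lemma bounded_score lam c k : bounded_mfun (fun w => sc lam c k w).
Proof.
rewrite /score; apply: bounded_sub; last exact: bounded_cst.
exact: bounded_scale (bounded_p k c).
Qed.

Lemma bounded_max_score lam c :
  bounded_mfun (fun w => maxK (score P S p lam (X w) c)).
Proof.
exact: (bounded_maxK i0 (fun k w => sc lam c k w) (bounded_score lam c)).
Qed.

Lemma measurable_Hk (h : T -> bool -> 'I_K) k c : is_classifier h ->
  measurable (Hk h k c).
Proof. by move=> hc; have := measurable_preimage_X _ (hc k c). Qed.

Lemma sum_over_choice (h : T -> bool -> 'I_K) c w (F : 'I_K -> R) :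
  \sum_k \1_(Hk h k c) w * F k = F (h (X w) c).
Proof.
rewrite (bigD1 (h (X w) c)) //= indic1 // mul1r big1 ?addr0 // => i hi.
by rewrite indic0 ?mul0r // => /= e; move: hi; rewrite e eqxx.
Qed.

Lemma bounded_chosen_score (h : T -> bool -> 'I_K) lam c : is_classifier h ->
  bounded_mfun (fun w => sc lam c (h (X w) c) w).
Proof.
move=> hc; under eq_fun do rewrite -sum_over_choice.
apply: bounded_sum => k; apply: bounded_indicM; [exact: measurable_Hk|].
exact: bounded_score.
Qed.

Definition class_mass (h : T -> bool -> 'I_K) c k :=
  fine (P (B c `&` Hk h k c)).
Definition correct_mass (h : T -> bool -> 'I_K) c :=
  \sum_k fine (P ([set w | Y w = k] `&` (B c `&` Hk h k c))).

Lemma condprob_class_mass (h : T -> bool -> 'I_K) c k :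
  condprob P S [set w | h (X w) (S w) = k] c = class_mass h c k / pic c.
Proof.
rewrite /condprob /class_mass /prob; congr (fine (P _) / _).
apply/seteqP; split => w /= [h1 h2]; split => //; first by rewrite -h2.
by rewrite h1.
Qed.

(* Integrated score of a classifier: by the defining property of p,
     E[score(h) ; S = c] =
       pi_c P(h = Y, S = c) - c sum_k lam_k P(h = k, S = c). *)
Lemma E_chosen_score (h : T -> bool -> 'I_K) lam c : is_classifier h ->
  E (B c) (fun w => sc lam c (h (X w) c) w) =
  pic c * correct_mass h c - sgnb c * \sum_k lam k * class_mass h c k.
Proof.
move=> hc; under eq_Rintegral do rewrite -sum_over_choice.
rewrite E_sum //; last first.
  move=> k; apply: bounded_indicM; first exact: measurable_Hk.
  exact: bounded_score.
have -> : \sum_k E (B c) (fun w => \1_(Hk h k c) w * sc lam c k w) =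
   \sum_k (pic c * E (B c `&` Hk h k c) (fun w => p k (X w) c)
           - sgnb c * (lam k * class_mass h c k)).
  apply: eq_bigr => k _; rewrite E_restrict /score.
  have mBH : measurable (B c `&` Hk h k c).
    by apply: measurableI => //; exact: measurable_Hk.
  under eq_Rintegral do rewrite -mulNr.
  rewrite E_add //; [|exact: bounded_scale (bounded_p k c)|exact: bounded_cst].
  by rewrite E_scale ?E_cst ?mulNr ?mulrA //; exact: bounded_p.
rewrite sumrB -mulr_sumr -mulr_sumr; congr (_ * _ - _).
apply: eq_bigr => k _; have [_ [_ cp]] := hcp k c.
by rewrite /Rintegral -(cp _ (hc k c)).
Qed.

(* For a fair classifier the lam-terms cancel between the two groups. *)
Lemma value_of_fair (h : T -> bool -> 'I_K) lam : is_classifier h ->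
  exactly_fair P X S h ->
  E (B true) (fun w => sc lam true (h (X w) true) w) / pic true +
  E (B false) (fun w => sc lam false (h (X w) false) w) / pic false =
  correct_mass h true + correct_mass h false.
Proof.
move=> hc hf; rewrite !E_chosen_score //.
have e c : (pic c * correct_mass h c - sgnb c * \sum_k lam k * class_mass h c k)
    / pic c =
    correct_mass h c - sgnb c * \sum_k lam k * (class_mass h c k / pic c).
  rewrite mulrBl [pic c * _]mulrC -mulrA divff ?mulr1; last exact/lt0r_neq0.
  rewrite -mulrA mulr_suml; congr (_ - _ * _).
  by apply: eq_bigr => k _; rewrite mulrA.
rewrite !e.
under eq_bigr do rewrite -condprob_class_mass hf condprob_class_mass.
by rewrite /sgnb; lra.
Qed.

Lemma measurable_correct (h : T -> bool -> 'I_K) : is_classifier h ->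
  measurable [set w | h (X w) (S w) = Y w].
Proof.
move=> hc.
have mEq c : measurable [set w | h (X w) c = Y w].
  have -> : [set w | h (X w) c = Y w] =
      \bigcup_(k in [set: 'I_K]) (Hk h k c `&` [set w | Y w = k]).
    apply/seteqP; split => w /=; first by move=> e; exists (Y w).
    by move=> [k _ [/= -> ->]].
  apply: fin_bigcup_measurable => // k _.
  by apply: measurableI => //; exact: measurable_Hk.
have -> : [set w | h (X w) (S w) = Y w] =
   (B true `&` [set w | h (X w) true = Y w]) `|`
   (B false `&` [set w | h (X w) false = Y w]).
  apply/seteqP; split => w /=; first by case: (S w) => e; [left|right].
  by move=> [[-> e]|[-> e]].
by apply: measurableU; apply: measurableI.
Qed.

Lemma E_correct_group (h : T -> bool -> 'I_K) c : is_classifier h ->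
  E (B c) (fun w => \1_[set w | h (X w) (S w) = Y w] w) = correct_mass h c.
Proof.
move=> hc.
have -> : E (B c) (fun w => \1_[set w | h (X w) (S w) = Y w] w) =
    E (B c) (fun w => \sum_k \1_(Hk h k c) w * \1_[set w | Y w = k] w).
  apply: eq_Rintegral => w; rewrite inE /= => Sw.
  by rewrite sum_over_choice; apply: indic_iff => /=; rewrite Sw; split=> ->.
rewrite (E_sum P (B c) _ (index_enum 'I_K) (fun _ => true)
   (fun k w => \1_(Hk h k c) w * \1_[set w | Y w = k] w)) //; last first.
  move=> k; apply: bounded_indicM; first exact: measurable_Hk.
  exact: bounded_indic.
apply: eq_bigr => k _; rewrite E_restrict E_indic //.
by apply: measurableI => //; exact: measurable_Hk.
Qed.

Lemma risk_correct_mass (h : T -> bool -> 'I_K) : is_classifier h ->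
  risk P X S Y h = 1 - (correct_mass h true + correct_mass h false).
Proof.
move=> hc; set C := [set w | h (X w) (S w) = Y w].
have mC : measurable C := measurable_correct h hc.
have bC := bounded_indic _ mC.
have -> : risk P X S Y h = E setT (fun w => 1 + (-1) * \1_C w).
  rewrite /risk /prob -[X in fine (P X)]setIT -E_indic //; last first.
    by rewrite -/(~` C); exact: measurableC.
  apply: eq_Rintegral => w _; have [e|e] := pselect (C w).
    by rewrite indic0 ?indic1 ?mulr1 ?subrr // => /(_ e).
  by rewrite indic1 ?indic0 ?mulr0 ?addr0.
rewrite E_add //; [|exact: bounded_cst|exact: bounded_scale].
rewrite E_scale // E_cst // probability_setT mul1r mulN1r; congr (_ - _).
have -> : E setT (fun w => \1_C w) =
  E setT (fun w => \1_(B true) w * \1_C w + \1_(B false) w * \1_C w).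
  apply: eq_Rintegral => w _; case Sw: (S w).
    rewrite (@indic1 _ _ _ (B true)) /=; last by rewrite Sw.
    by rewrite (@indic0 _ _ _ (B false)) /= ?Sw // mul1r mul0r addr0.
  rewrite (@indic1 _ _ _ (B false)) /=; last by rewrite Sw.
  by rewrite (@indic0 _ _ _ (B true)) /= ?Sw // mul1r mul0r add0r.
rewrite E_add //; try by apply: bounded_indicM.
by rewrite !E_restrict !setTI !E_correct_group.
Qed.

Definition shift_lambda (lam : 'I_K -> R) (k : 'I_K) (sg t : R) : 'I_K -> R :=
  fun j => lam j + (if j == k then sg * t else 0).

Lemma score_shift_own lam k b t w j :
  score P S p (shift_lambda lam k (sgnb b) t) (X w) b j =
  score P S p lam (X w) b j - (if j == k then t else 0).
Proof.
rewrite /score /shift_lambda; case: (j == k); case: b; rewrite /sgnb; lra.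
Qed.

Lemma score_shift_other lam k b t w j :
  score P S p (shift_lambda lam k (sgnb b) t) (X w) (~~ b) j =
  score P S p lam (X w) (~~ b) j + (if j == k then t else 0).
Proof.
rewrite /score /shift_lambda; case: (j == k); case: b; rewrite /sgnb /=; lra.
Qed.

Lemma dual_obj_split lam b :
  dual_obj P X S p lam =
  E (B b) (fun w => maxK (score P S p lam (X w) b)) / pic b +
  E (B (~~ b)) (fun w => maxK (score P S p lam (X w) (~~ b))) / pic (~~ b).
Proof. by case: b => //; rewrite /dual_obj addrC. Qed.

Local Notation tie_set lam c i j t :=
  [set w | 0 <= sc lam c i w - sc lam c j w /\
           sc lam c i w - sc lam c j w <= t].

Lemma measurable_tie_set lam c i j t : measurable (tie_set lam c i j t).
Proof.
have [mf _] : bounded_mfun (fun w => sc lam c i w - sc lam c j w).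
  by apply: bounded_sub; exact: bounded_score.
have := measurableI _ _ (measurable_ge_set _ 0 mf) (measurable_le_set _ t mf).
by [].
Qed.

Lemma near_ties_indic lam c t w :
  near_ties (fun j => sc lam c j w) t =
  \sum_i \sum_(j | j != i) \1_(tie_set lam c i j t) w.
Proof.
apply: eq_bigr => i _; apply: eq_bigr => j _; apply/esym/indic_bool => /=.
by split; [case => -> -> | move/andP].
Qed.

Lemma bounded_near_ties lam c t :
  bounded_mfun (fun w => near_ties (fun j => sc lam c j w) t).
Proof.
under eq_fun do rewrite near_ties_indic.
apply: bounded_sum => i; apply: bounded_sum => j.
exact/bounded_indic/measurable_tie_set.
Qed.

Lemma E_near_ties lam c t :
  E (B c) (fun w => near_ties (fun j => sc lam c j w) t) =
  \sum_i \sum_(j | j != i) fine (P (tie_set lam c i j t `&` B c)).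
Proof.
under eq_Rintegral do rewrite near_ties_indic.
rewrite E_sum //; last first.
  by move=> i; apply: bounded_sum => j; exact/bounded_indic/measurable_tie_set.
apply: eq_bigr => i _; rewrite E_sum //; last first.
  by move=> j; exact/bounded_indic/measurable_tie_set.
by apply: eq_bigr => j _; rewrite E_indic //; exact: measurable_tie_set.
Qed.

Lemma chooses_indic (h : T -> bool -> 'I_K) c k w :
  (h (X w) c == k)%:R = \1_(Hk h k c) w :> R.
Proof. by apply/esym/indic_bool => /=; split=> [->|/eqP]. Qed.

Lemma bounded_chooses (h : T -> bool -> 'I_K) c k : is_classifier h ->
  bounded_mfun (fun w => (h (X w) c == k)%:R : R).
Proof.
move=> hc; under eq_fun do rewrite chooses_indic.
exact/bounded_indic/measurable_Hk.
Qed.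

Lemma E_chooses (h : T -> bool -> 'I_K) c k : is_classifier h ->
  E (B c) (fun w => (h (X w) c == k)%:R : R) = class_mass h c k.
Proof.
move=> hc; under eq_Rintegral do rewrite chooses_indic.
by rewrite E_indic // 1?setIC //; exact: measurable_Hk.
Qed.

Lemma E_max_score_perturbed (h : T -> bool -> 'I_K) lam lam' c k (sg t : R) :
  is_classifier h ->
  (forall w, maxK (score P S p lam' (X w) c) <=
     maxK (score P S p lam (X w) c) + sg * (h (X w) c == k)%:R +
     t * near_ties (fun j => sc lam c j w) t) ->
  E (B c) (fun w => maxK (score P S p lam' (X w) c)) <=
  E (B c) (fun w => maxK (score P S p lam (X w) c)) + sg * class_mass h c k +
  t * E (B c) (fun w => near_ties (fun j => sc lam c j w) t).
Proof.
move=> hc hle.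
have b1 := bounded_chooses h c k hc; have b2 := bounded_near_ties lam c t.
have b3 := bounded_max_score lam c.
have hs1 := bounded_scale sg b1; have hs2 := bounded_scale t b2.
have hs3 := bounded_add _ _ b3 hs1.
apply: le_trans (E_le P _ _ _ (mS c) (bounded_max_score lam' c)
  (bounded_add _ _ hs3 hs2) (fun w _ => hle w)) _.
rewrite (E_add P _ _ _ _ hs3 hs2) // (E_add P _ _ _ _ b3 hs1) //.
by rewrite (E_scale P _ _ _ _ b1) // (E_scale P _ _ _ _ b2) // E_chooses.
Qed.

(* Minimality of lam against the perturbation shift_lambda lam k (sgnb b) t,
   for a pointwise maximizer g of its scores: the fairness defect for class k
   is bounded by the expected numbers of near ties at level t. *)
Lemma fairness_defect_le_near_ties (g : T -> bool -> 'I_K) lam b k t :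
  is_classifier g ->
  (forall x c j, score P S p lam x c j <= score P S p lam x c (g x c)) ->
  (forall lam', dual_obj P X S p lam <= dual_obj P X S p lam') -> 0 < t ->
  class_mass g b k / pic b <= class_mass g (~~ b) k / pic (~~ b) +
    (E (B b) (fun w => near_ties (fun j => sc lam b j w) t) / pic b +
     E (B (~~ b)) (fun w => near_ties (fun j => sc lam (~~ b) j w) t)
       / pic (~~ b)).
Proof.
move=> hc hg hmin t0; set lam' := shift_lambda lam k (sgnb b) t.
have own : E (B b) (fun w => maxK (score P S p lam' (X w) b)) <=
    E (B b) (fun w => maxK (score P S p lam (X w) b)) +
    - t * class_mass g b k +
    t * E (B b) (fun w => near_ties (fun j => sc lam b j w) t).
  apply: E_max_score_perturbed => // w; rewrite mulNr.
  have -> : score P S p lam' (X w) b =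
      (fun j => sc lam b j w - (if j == k then t else 0)).
    by apply/funext => j; rewrite score_shift_own.
  exact: (maxK_shift_down (fun j => sc lam b j w) (g (X w) b) k t (ltW t0)
    (fun j => hg (X w) b j)).
have other : E (B (~~ b)) (fun w => maxK (score P S p lam' (X w) (~~ b))) <=
    E (B (~~ b)) (fun w => maxK (score P S p lam (X w) (~~ b))) +
    t * class_mass g (~~ b) k +
    t * E (B (~~ b)) (fun w => near_ties (fun j => sc lam (~~ b) j w) t).
  apply: E_max_score_perturbed => // w.
  have -> : score P S p lam' (X w) (~~ b) =
      (fun j => sc lam (~~ b) j w + (if j == k then t else 0)).
    by apply/funext => j; rewrite score_shift_other.
  exact: (maxK_shift_up (fun j => sc lam (~~ b) j w) (g (X w) (~~ b)) k t
    (ltW t0) (fun j => hg (X w) (~~ b) j)).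
apply: (perturbation_ratio_le
  (E (B b) (fun w => maxK (score P S p lam (X w) b)))
  (E (B (~~ b)) (fun w => maxK (score P S p lam (X w) (~~ b))))
  _ _ _ _ _ _ _ t0).
have := hmin lam'; rewrite (dual_obj_split lam b) (dual_obj_split lam' b).
move/le_trans; apply; rewrite mulNr in own.
by apply: lerD; apply: ler_wpM2r => //; rewrite invr_ge0 ltW.
Qed.

Definition gap_cdf (c : bool) (i j : 'I_K) (v : R) : R :=
  condprob P S [set w | p i (X w) (S w) - p j (X w) (S w) <= v] c.

Lemma E_gap_le (c : bool) (i j : 'I_K) (v : R) :
  E (B c) (fun w => \1_[set w | p i (X w) c - p j (X w) c <= v] w) =
  gap_cdf c i j v * pic c.
Proof.
have [mf _] : bounded_mfun (fun w => p i (X w) c - p j (X w) c).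
  by apply: bounded_sub; exact: bounded_p.
rewrite E_indic //; last exact: (measurable_le_set _ v mf).
rewrite /gap_cdf /condprob /prob divfK; last exact/lt0r_neq0.
congr (fine (P _)); apply/seteqP; split => w /= [h1 h2]; split => //;
  by move: h1; rewrite h2.
Qed.

(* With pi_c u = c (lam_i - lam_j), a near tie at level t between i and j
   forces p_i - p_j into the interval ]u - t / pi_c, u + t / pi_c], so its
   probability is an increment of gap_cdf. *)
Lemma tie_prob_le_gap_cdf lam c i j t u : 0 < t ->
  pic c * u = sgnb c * (lam i - lam j) ->
  fine (P (tie_set lam c i j t `&` B c)) <=
  (gap_cdf c i j (u + t / pic c) - gap_cdf c i j (u - t / pic c)) * pic c.
Proof.
move=> t0 hu; set h := t / pic c; have pc := pi_gt0 c.
have h0 : 0 < h by exact: divr_gt0.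
have hh : pic c * h = t by rewrite /h mulrC divfK // lt0r_neq0.
set D := fun w => p i (X w) c - p j (X w) c.
have bD v : bounded_mfun (fun w => \1_[set w | D w <= v] w).
  apply/bounded_indic/measurable_le_set.
  by have [] : bounded_mfun D by apply: bounded_sub; exact: bounded_p.
have band : E (B c) (fun w => \1_(tie_set lam c i j t) w) <=
    E (B c) (fun w => \1_[set w | D w <= u + h] w +
       (-1) * \1_[set w | D w <= u - h] w).
  apply: E_le => //; first exact/bounded_indic/measurable_tie_set.
    by apply: bounded_add => //; exact: bounded_scale.
  move=> w _; have e : sc lam c i w - sc lam c j w =
      pic c * D w - sgnb c * (lam i - lam j) by rewrite /score /D; ring.
  have [Tw|nT] := pselect (tie_set lam c i j t w).
    have [ha hb] := Tw; rewrite e in ha hb.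
    have hi : D w <= u + h by nra.
    have lo : ~ (D w <= u - h) by move=> ?; nra.
    rewrite (indic1 _ _ Tw) (indic0 [set w | D w <= u - h] _ lo).
    by rewrite (indic1 [set w | D w <= u + h] _ hi) mulr0 addr0.
  rewrite (indic0 _ _ nT); have [lo|lo] := pselect (D w <= u - h).
    have hi : D w <= u + h by rewrite (le_trans lo) //; lra.
    rewrite (indic1 [set w | D w <= u - h] _ lo).
    by rewrite (indic1 [set w | D w <= u + h] _ hi) mulr1 subrr.
  by rewrite (indic0 [set w | D w <= u - h] _ lo) mulr0 addr0 indicE ler0n.
rewrite E_add // in band; last exact: bounded_scale.
rewrite E_scale // !E_gap_le E_indic // in band; last exact: measurable_tie_set.
by rewrite mulrBl; lra.
Qed.

(* By continuity of gap_cdf, near ties between two distinct classes have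
   small probability for small t. *)
Lemma near_tie_prob_small lam c i j e : continuity_assumption P X S p ->
  i != j -> 0 < e ->
  exists2 dl, 0 < dl & forall t, 0 < t -> t < dl ->
    fine (P (tie_set lam c i j t `&` B c)) / pic c <= e.
Proof.
move=> hcont ij e0; have pc := pi_gt0 c.
set u := sgnb c * (lam i - lam j) / pic c.
have hu : pic c * u = sgnb c * (lam i - lam j).
  by rewrite /u mulrC divfK // lt0r_neq0.
have e2 : 0 < e / 2 by lra.
have [dl dl0 near_u] :=
  continuous_at_delta (gap_cdf c i j) u (e / 2) (hcont i j c ij u) e2.
exists (dl * pic c); first exact: mulr_gt0.
move=> t t0 tdl; set h := t / pic c.
have h0 : 0 < h by exact: divr_gt0.
have hdl : h < dl by rewrite /h ltr_pdivrMr.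
have /near_u : `|u - (u + h)| < dl.
  by rewrite opprD addrA subrr sub0r normrN gtr0_norm.
have /near_u : `|u - (u - h)| < dl by rewrite opprB addrC subrK gtr0_norm.
rewrite !ltr_norml => /andP[lo1 lo2] /andP[hi1 hi2].
rewrite ler_pdivrMr //.
apply: le_trans (tie_prob_le_gap_cdf lam c i j t u t0 hu) _.
by apply: ler_wpM2r; [exact: ltW | lra].
Qed.

Lemma num_pairs_gt0 : 0 < \sum_(i : 'I_K) \sum_(j : 'I_K) (1 : R).
Proof.
rewrite (bigD1 i0) //= [X in 0 < X + _](bigD1 i0) //=.
have h1 : 0 <= \sum_(i < K | i != i0) (1 : R) by apply: sumr_ge0.
have h2 : 0 <= \sum_(i < K | i != i0) \sum_(j < K) (1 : R).
  by apply: sumr_ge0 => i _; exact: sumr_ge0.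
lra.
Qed.

(* Letting t -> 0 in fairness_defect_le_near_ties: choosing t below the
   thresholds given by near_tie_prob_small for all (c, i, j) makes the
   near-tie terms at most any e > 0. *)
Lemma fair_ratio_le (g : T -> bool -> 'I_K) lam b k :
  continuity_assumption P X S p -> is_classifier g ->
  (forall x c j, score P S p lam x c j <= score P S p lam x c (g x c)) ->
  (forall lam', dual_obj P X S p lam <= dual_obj P X S p lam') ->
  class_mass g b k / pic b <= class_mass g (~~ b) k / pic (~~ b).
Proof.
move=> hcont hc hg hmin; apply/ler_addgt0Pr => e e0.
set N := \sum_(i : 'I_K) \sum_(j : 'I_K) (1 : R).
have N0 : 0 < N := num_pairs_gt0.
set e' := e / (2 * N).
have e'0 : 0 < e' by apply: divr_gt0 => //; exact: mulr_gt0.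
have thresholds : forall x : bool * 'I_K * 'I_K, exists dl, 0 < dl /\
    forall t, 0 < t -> t < dl -> x.1.2 != x.2 ->
      fine (P (tie_set lam x.1.1 x.1.2 x.2 t `&` B x.1.1)) / pic x.1.1 <= e'.
  move=> [[c i] j] /=; have [->|ij] := eqVneq i j.
    by exists 1; split => // t _ _; rewrite eqxx.
  have [dl dl0 Hd] := near_tie_prob_small lam c i j e' hcont ij e'0.
  by exists dl; split => // t t0 tdl _; exact: Hd.
have [dl Hdl] := choice thresholds.
set t := (\big[Num.min/1]_(x : bool * 'I_K * 'I_K) dl x) / 2.
have m0 : 0 < \big[Num.min/1]_(x : bool * 'I_K * 'I_K) dl x.
  by apply: lt_bigmin => // x _; have [] := Hdl x.
have t0 : 0 < t by rewrite /t; lra.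
have t_dl x : t < dl x.
  rewrite (@lt_le_trans _ _ (\big[Num.min/1]_(x : bool * 'I_K * 'I_K) dl x)) //.
    by rewrite /t; lra.
  exact: bigmin_le.
have ties_small c : E (B c) (fun w => near_ties (fun j => sc lam c j w) t)
    / pic c <= e' * N.
  rewrite E_near_ties mulr_suml /N mulr_sumr; apply: ler_sum => i _.
  rewrite mulr_suml mulr_sumr big_mkcond /=; apply: ler_sum => j _.
  case: ifP => ji; rewrite mulr1; last exact: ltW.
  by have [_ ->] := Hdl (c, i, j); rewrite //= eq_sym.
apply: (le_trans (fairness_defect_le_near_ties g lam b k t hc hg hmin t0)).
rewrite lerD2l (@le_trans _ _ (e' * N + e' * N)) //; first exact: lerD.
have -> : e' * N = e / 2 by rewrite /e'; field; rewrite lt0r_neq0.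
lra.
Qed.

Lemma threshold_fair (g : T -> bool -> 'I_K) lam :
  continuity_assumption P X S p -> is_classifier g ->
  (forall x c j, score P S p lam x c j <= score P S p lam x c (g x c)) ->
  (forall lam', dual_obj P X S p lam <= dual_obj P X S p lam') ->
  exactly_fair P X S g.
Proof.
move=> hcont hc hg hmin k; rewrite !condprob_class_mass.
apply/le_anti; rewrite (fair_ratio_le g lam true k) //.
by rewrite (fair_ratio_le g lam false k).
Qed.

(* Against a fair competitor h, g wins since it maximizes the scores
   pointwise and both values equal the probability of a correct guess. *)
Lemma threshold_optimal (g h : T -> bool -> 'I_K) lam :
  is_classifier g -> exactly_fair P X S g ->
  (forall x c j, score P S p lam x c j <= score P S p lam x c (g x c)) ->
  is_classifier h -> exactly_fair P X S h ->
  risk P X S Y g <= risk P X S Y h.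
Proof.
move=> hc hf hg hc' hf'.
rewrite (risk_correct_mass g hc) (risk_correct_mass h hc') lerB //.
rewrite -(value_of_fair g lam hc hf) -(value_of_fair h lam hc' hf').
apply: lerD; apply: ler_wpM2r; try by rewrite invr_ge0 ltW.
all: apply: E_le => //; try exact: bounded_chosen_score.
all: by move=> w _; exact: hg.
Qed.

End FairClassification.

Theorem corollary1 (d d' : measure_display) (Omega : measurableType d)
  (T : measurableType d') (R : realType) (P : probability Omega R) (K : nat)
  (X : Omega -> T) (S : Omega -> bool) (Y : Omega -> 'I_K)
  (p : 'I_K -> T -> bool -> R) (lamstar : 'I_K -> R) (g : T -> bool -> 'I_K) :
  measurable_fun setT X ->
  (forall b : bool, measurable [set w | S w = b]) ->
  (forall k : 'I_K, measurable [set w | Y w = k]) ->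
  (forall b : bool, 0 < pi_s P S b) ->
  is_cond_prob P X S Y p ->
  continuity_assumption P X S p ->
  (forall lam : 'I_K -> R, dual_obj P X S p lamstar <= dual_obj P X S p lam) ->
  is_classifier g ->
  (forall (x : T) (b : bool) (k : 'I_K),
      score P S p lamstar x b k <= score P S p lamstar x b (g x b)) ->
  exactly_fair P X S g /\
  (forall g' : T -> bool -> 'I_K, is_classifier g' -> exactly_fair P X S g' ->
      risk P X S Y g <= risk P X S Y g').
Proof.
move=> mX mS mY pi_gt0 hcp hcont hmin hc hg.
(* A probability space is nonempty, so g provides a class. *)
have [w _] : exists w : Omega, True.
  apply: contrapT => empty; have := probability_setT P.
  have -> : [set: Omega] = set0.
    by apply/seteqP; split => w // _; apply: empty; exists w.
  by rewrite measure0 => -[] /esym/eqP; rewrite oner_eq0.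
have fair : exactly_fair P X S g.
  exact: (threshold_fair P X S Y p mX mS pi_gt0 hcp (g (X w) (S w)) g lamstar).
split=> // g' hc' hf'.
exact: (threshold_optimal P X S Y p mX mS mY pi_gt0 hcp g g' lamstar).
Qed.
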